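(* Under the hypotheses of the approximate projection proposition ($V$ Hilbert, $Q\subset V$ with $M_Q<\infty$ and $-Q=Q$, $f:V\to\mathbb R^k$ linear with the Johnson–Lindenstrauss property on $Q$ with parameter $\epsilon>0$), let $C_Q:=\inf\{c\in\mathbb R_+:\|\mathbf v\|_Q\le c\|\mathbf v\|\ \text{for all }\mathbf v\in\mathrm{span}\{Q\}\}$. Then for every $\mathbf v\in\mathrm{span}\{Q\}$ such that $(f^*\circ f)(\mathbf v)\in\mathrm{span}\{Q\}$, $$\|(\mathbb I_V-f^*\circ f)(\mathbf v)\|\le\epsilon M_Q^2C_Q^2\|\mathbf v\|.$$
   Context: $M_Q=\sup\{\|\mathbf v\|:\mathbf v\in Q\}$; $\|\mathbf v\|_Q=\inf\{\sum_j|\lambda_j|:\sum_j\lambda_j\mathbf v_j=\mathbf v,\ \mathbf v_j\in Q\}$ over finite combinations. Johnson–Lindenstrauss property with parameter $\epsilon$: $(1-\epsilon)\|\mathbf v_1-\mathbf v_2\|^2\le\|f(\mathbf v_1)-f(\mathbf v_2)\|^2\le(1+\epsilon)\|\mathbf v_1-\mathbf v_2\|^2$ for all $\mathbf v_1,\mathbf v_2\in Q$, the norm on $\mathbb R^k$ being induced by a fixed inner product; $f^*$ is the adjoint of $f$. *)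

From HB Require Import structures.
From mathcomp Require Import all_boot all_order all_algebra.
From mathcomp Require Import all_classical all_reals all_analysis.
Set Implicit Arguments. Unset Strict Implicit. Unset Printing Implicit Defensive.
Import Order.TTheory GRing.Theory Num.Theory.
Import numFieldNormedType.Exports.
Local Open Scope classical_set_scope.
Local Open Scope ring_scope.

(* A real inner product on a normed space V that induces its norm.
   Together with completeness of V (completeNormedModType) this makes V a
   real Hilbert space. *)
Definition inner_product_of_norm (R : realType) (V : normedModType R)
  (ip : V -> V -> R) : Prop :=
  [/\ forall (a : R) (u v w : V), ip (a *: u + v) w = a * ip u w + ip v w,
      forall u v : V, ip u v = ip v u
    & forall v : V, ip v v = `|v| ^+ 2].

Definition inner_product_rV (R : realType) (k : nat)
  (ip : 'rV[R]_k -> 'rV[R]_k -> R) : Prop :=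
  [/\ forall (a : R) (u v w : 'rV[R]_k), ip (a *: u + v) w = a * ip u w + ip v w,
      forall u v : 'rV[R]_k, ip u v = ip v u
    & forall w : 'rV[R]_k, w != 0 -> 0 < ip w w].

Definition combo (R : realType) (V : normedModType R) (s : seq (R * V)) : V :=
  \sum_(p <- s) p.1 *: p.2.

Definition span_set (R : realType) (V : normedModType R) (Q : set V) : set V :=
  [set v | exists s : seq (R * V), (forall p, p \in s -> Q p.2) /\ combo s = v].

Definition M_Q (R : realType) (V : normedModType R) (Q : set V) : R :=
  sup [set `|v| | v in Q].

Definition atomic_norm (R : realType) (V : normedModType R) (Q : set V) (v : V) : R :=
  inf [set \sum_(p <- s) `|p.1| | s in
       [set s : seq (R * V) | (forall p, p \in s -> Q p.2) /\ combo s = v]].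

(* C_Q = inf { c >= 0 : |v|_Q <= c |v| for all v in span Q }, in \bar R
   (it is +oo when no such c exists). *)
Definition C_Q (R : realType) (V : normedModType R) (Q : set V) : \bar R :=
  ereal_inf [set c%:E | c in
    [set c : R | 0 <= c /\ forall v, span_set Q v -> atomic_norm Q v <= c * `|v|]].

From HB Require Import structures.
From mathcomp Require Import all_boot all_order all_algebra.
From mathcomp Require Import all_classical all_reals all_analysis.
From mathcomp Require Import ring lra.
Set Implicit Arguments. Unset Strict Implicit. Unset Printing Implicit Defensive.
Import Order.TTheory GRing.Theory Num.Theory.
Import numFieldNormedType.Exports.
Local Open Scope classical_set_scope.
Local Open Scope ring_scope.

(* Consider the "defect" form
     D x y := <x, y> - <f x, f y>,
   a symmetric bilinear form on V; the adjoint relation gives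
     <(I - f^* f) v, z> = D v z.
   1. By polarization 4 D u w = D(u+w,u+w) - D(u-w,u-w), and the
      Johnson-Lindenstrauss property applied to the pairs (u, -w) and (u, w)
      (using Q = -Q) together with the parallelogram identity yields
      |D u w| <= eps M_Q^2 for all u, w in Q.
   2. By bilinearity this extends to |D x y| <= eps M_Q^2 |x|_Q |y|_Q on
      span Q, taking the infimum over all representations of x and y.
   3. With z := (I - f^* f) v (which lies in span Q) this gives
      |z|^2 = D v z <= eps M_Q^2 |v|_Q |z|_Q <= eps M_Q^2 C_Q^2 |v| |z|,
      and dividing by |z| proves the claim.  When C_Q = +oo the bound is
      trivial, the right-hand side being either +oo or, if z = 0, nonnegative. *)

Section SymmetricBilinear.
Variables (R : realType) (W : lmodType R) (B : W -> W -> R).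
Hypothesis B_linear : forall (a : R) (u v w : W), B (a *: u + v) w = a * B u w + B v w.
Hypothesis B_sym : forall u v : W, B u v = B v u.

Lemma bilin0l w : B 0 w = 0.
Proof. have := B_linear 1 0 0 w; rewrite scale1r addr0 mul1r; lra. Qed.

Lemma bilinDl u v w : B (u + v) w = B u w + B v w.
Proof. by rewrite -[u]scale1r B_linear mul1r scale1r. Qed.

Lemma bilinNl u w : B (- u) w = - B u w.
Proof. by rewrite -scaleN1r -[_ *: u]addr0 B_linear bilin0l addr0 mulN1r. Qed.

Lemma bilinBl u v w : B (u - v) w = B u w - B v w.
Proof. by rewrite bilinDl bilinNl. Qed.

Lemma bilinBr u v w : B w (u - v) = B w u - B w v.
Proof. by rewrite B_sym bilinBl !(B_sym w). Qed.

Lemma bilinDr u v w : B w (u + v) = B w u + B w v.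
Proof. by rewrite B_sym bilinDl !(B_sym w). Qed.

Lemma polarization a b : B (a + b) (a + b) - B (a - b) (a - b) = 4 * B a b.
Proof. rewrite !bilinBl !bilinDl !bilinBr !bilinDr (B_sym b a); ring. Qed.

Lemma parallelogram a b :
  B (a + b) (a + b) + B (a - b) (a - b) = 2 * B a a + 2 * B b b.
Proof. rewrite !bilinBl !bilinDl !bilinBr !bilinDr (B_sym b a); ring. Qed.

End SymmetricBilinear.

Section CombinationBounds.
Variables (R : realType) (V : normedModType R) (B : V -> V -> R).
Hypothesis B_linear : forall (a : R) (u v w : V), B (a *: u + v) w = a * B u w + B v w.
Hypothesis B_sym : forall u v : V, B u v = B v u.
Variables (Q : set V) (K : R).
Hypothesis B_atoms : forall u w, Q u -> Q w -> `|B u w| <= K.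

Lemma bilin_combo_le (s : seq (R * V)) y :
  `|B (combo s) y| <= \sum_(p <- s) `|p.1| * `|B p.2 y|.
Proof.
elim: s => [|p s IH]; first by rewrite /combo !big_nil bilin0l // normr0.
rewrite /combo !big_cons B_linear.
by apply: (le_trans (ler_normD _ _)); rewrite normrM lerD2l.
Qed.

Lemma bilin_combo_bound (s t : seq (R * V)) :
  (forall p, p \in s -> Q p.2) -> (forall p, p \in t -> Q p.2) ->
  `|B (combo s) (combo t)| <= K * (\sum_(p <- s) `|p.1|) * (\sum_(q <- t) `|q.1|).
Proof.
move=> Qs Qt; apply: (le_trans (bilin_combo_le s (combo t))).
rewrite mulrAC mulrC mulr_suml big_seq [X in _ <= X]big_seq.
apply: ler_sum => p ps; rewrite ler_wpM2l // B_sym.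
apply: (le_trans (bilin_combo_le t p.2)).
rewrite mulr_sumr big_seq [X in _ <= X]big_seq.
apply: ler_sum => q qt; rewrite mulrC ler_wpM2r //.
by apply: B_atoms; [exact: Qt|exact: Qs].
Qed.

End CombinationBounds.

Definition rep_costs (R : realType) (V : normedModType R) (Q : set V) (x : V) : set R :=
  [set \sum_(p <- s) `|p.1| | s in
     [set s : seq (R * V) | (forall p, p \in s -> Q p.2) /\ combo s = x]].

Lemma rep_costs_ge0 (R : realType) (V : normedModType R) (Q : set V) x a :
  rep_costs Q x a -> 0 <= a.
Proof. by move=> [s _ <-]; apply: sumr_ge0 => p _. Qed.

Lemma rep_costs_neq0 (R : realType) (V : normedModType R) (Q : set V) x :
  span_set Q x -> rep_costs Q x !=set0.
Proof. by move=> [s Hs]; exists (\sum_(p <- s) `|p.1|), s. Qed.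

Lemma atomic_norm_ge0 (R : realType) (V : normedModType R) (Q : set V) x :
  span_set Q x -> 0 <= atomic_norm Q x.
Proof. by move=> Sx; apply: lb_le_inf; [exact: rep_costs_neq0|exact: rep_costs_ge0]. Qed.

Lemma le_mul_inf (R : realType) (X c : R) (S : set R) :
  0 <= c -> S !=set0 -> (forall a, S a -> X <= c * a) -> X <= c * inf S.
Proof.
move=> c_ge0 [a0 Sa0] HX.
have [c0|c_neq0] := eqVneq c 0.
  by move: (HX a0 Sa0); rewrite c0 !mul0r.
have c_gt0 : 0 < c by rewrite lt_def c_neq0 c_ge0.
rewrite mulrC -ler_pdivrMr //; apply: lb_le_inf; first by exists a0.
by move=> a Sa; rewrite ler_pdivrMr // mulrC; apply: HX.
Qed.

Lemma bilin_atomic_bound (R : realType) (V : normedModType R) (B : V -> V -> R)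
    (Q : set V) (K : R) :
  (forall (a : R) (u v w : V), B (a *: u + v) w = a * B u w + B v w) ->
  (forall u v : V, B u v = B v u) ->
  0 <= K -> (forall u w, Q u -> Q w -> `|B u w| <= K) ->
  forall x y, span_set Q x -> span_set Q y ->
  `|B x y| <= K * atomic_norm Q x * atomic_norm Q y.
Proof.
move=> B_linear B_sym K_ge0 B_atoms x y Sx Sy.
apply: le_mul_inf; [by rewrite mulr_ge0 ?atomic_norm_ge0|exact: rep_costs_neq0|].
move=> b [t [Qt <-] <-]; rewrite mulrAC.
apply: le_mul_inf; [by rewrite mulr_ge0 // sumr_ge0|exact: rep_costs_neq0|].
move=> a [s [Qs <-] <-]; rewrite mulrAC.
exact: (bilin_combo_bound B_linear B_sym B_atoms Qs Qt).
Qed.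

Lemma C_Q_ge0 (R : realType) (V : normedModType R) (Q : set V) : (0 <= C_Q Q)%E.
Proof. by apply: le_ereal_inf_tmp => y [c [c_ge0 _] <-]; rewrite lee_fin. Qed.

Lemma atomic_norm_le_C_Q (R : realType) (V : normedModType R) (Q : set V) (r : R) x :
  C_Q Q = r%:E -> span_set Q x -> atomic_norm Q x <= r * `|x|.
Proof.
move=> Cr Sx; have [x0|x_gt0] := eqVneq `|x| 0.
  have [c [c_ge0 Hc]] : exists c : R, 0 <= c /\
      forall v, span_set Q v -> atomic_norm Q v <= c * `|v|.
    apply: contrapT => noc; move: Cr; rewrite /C_Q.
    suff -> : [set c%:E | c in [set c : R | 0 <= c /\ forall v, span_set Q v ->
        atomic_norm Q v <= c * `|v|]] = set0 by rewrite ereal_inf0.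
    by apply/seteqP; split=> // e [c Hc _]; apply: noc; exists c.
  by have := Hc x Sx; rewrite x0 !mulr0.
have x_pos : 0 < `|x| by rewrite lt_def x_gt0 normr_ge0.
rewrite -ler_pdivrMr // -lee_fin -Cr.
apply: le_ereal_inf_tmp => _ [c [c_ge0 Hc] <-].
by rewrite lee_fin ler_pdivrMr //; apply: Hc.
Qed.

Lemma span_setB (R : realType) (V : normedModType R) (Q : set V) x y :
  span_set Q x -> span_set Q y -> span_set Q (x - y).
Proof.
move=> [s [Qs <-]] [t [Qt <-]].
exists (s ++ map (fun p => (- p.1, p.2)) t); split.
  by move=> p; rewrite mem_cat => /orP[/Qs //|/mapP[q /Qt qt ->]].
rewrite /combo big_cat big_map -sumrN; congr (_ + _).
by apply: eq_bigr => p _; rewrite scaleNr.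
Qed.

Section DefectForm.
Variables (R : realType) (V : normedModType R) (W : lmodType R).
Variables (ip : V -> V -> R) (ipW : W -> W -> R) (f : {linear V -> W}).
Hypothesis ip_linear : forall (a : R) (u v w : V), ip (a *: u + v) w = a * ip u w + ip v w.
Hypothesis ip_sym : forall u v : V, ip u v = ip v u.
Hypothesis ip_norm : forall v : V, ip v v = `|v| ^+ 2.
Hypothesis ipW_linear :
  forall (a : R) (u v w : W), ipW (a *: u + v) w = a * ipW u w + ipW v w.
Hypothesis ipW_sym : forall u v : W, ipW u v = ipW v u.

Definition defect (x y : V) : R := ip x y - ipW (f x) (f y).

Lemma defect_linear (a : R) (u v w : V) :
  defect (a *: u + v) w = a * defect u w + defect v w.
Proof. by rewrite /defect linearD linearZ /= ip_linear ipW_linear; ring. Qed.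

Lemma defect_sym (u v : V) : defect u v = defect v u.
Proof. by rewrite /defect ip_sym ipW_sym. Qed.

Lemma defect_atoms_bound (Q : set V) (M eps : R) :
  [set - v | v in Q] = Q -> 0 <= eps ->
  (forall u, Q u -> `|u| <= M) ->
  (forall v1 v2, Q v1 -> Q v2 ->
     (1 - eps) * `|v1 - v2| ^+ 2 <= ipW (f v1 - f v2) (f v1 - f v2) /\
     ipW (f v1 - f v2) (f v1 - f v2) <= (1 + eps) * `|v1 - v2| ^+ 2) ->
  forall u w, Q u -> Q w -> `|defect u w| <= eps * M ^+ 2.
Proof.
move=> Qsym eps_ge0 QM JL u w Qu Qw.
have Qnw : Q (- w) by rewrite -Qsym; exists w.
have [JLp1 JLp2] := JL u (- w) Qu Qnw.
rewrite !raddfN !opprK in JLp1 JLp2.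
have [JLm1 JLm2] := JL u w Qu Qw.
have polar := polarization defect_linear defect_sym u w.
have para := parallelogram ip_linear ip_sym u w.
rewrite /defect !ip_norm !raddfD !raddfN /= in polar para.
have sq_le x : Q x -> eps * `|x| ^+ 2 <= eps * M ^+ 2.
  move=> Qx; rewrite ler_wpM2l // lerXn2r ?nnegrE ?QM //.
  exact: le_trans (normr_ge0 x) (QM x Qx).
have para_eps : eps * `|u + w| ^+ 2 + eps * `|u - w| ^+ 2 =
    2 * (eps * `|u| ^+ 2) + 2 * (eps * `|w| ^+ 2) by rewrite -mulrDr para; ring.
have := sq_le u Qu; have := sq_le w Qw.
rewrite /defect ler_norml; lra.
Qed.

End DefectForm.

Theorem mainTheorem7 (R : realType) (V : completeNormedModType R)
  (ip : V -> V -> R) (k : nat) (ipk : 'rV[R]_k -> 'rV[R]_k -> R)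
  (Q : set V) (f : {linear V -> 'rV[R]_k}) (fstar : 'rV[R]_k -> V) (eps : R) :
  inner_product_of_norm ip ->
  inner_product_rV ipk ->
  has_ubound [set `|v| | v in Q] ->
  [set - v | v in Q] = Q ->
  (forall (w : 'rV[R]_k) (v : V), ip (fstar w) v = ipk w (f v)) ->
  0 < eps ->
  (forall v1 v2, Q v1 -> Q v2 ->
     (1 - eps) * `|v1 - v2| ^+ 2 <= ipk (f v1 - f v2) (f v1 - f v2) /\
     ipk (f v1 - f v2) (f v1 - f v2) <= (1 + eps) * `|v1 - v2| ^+ 2) ->
  forall v : V, span_set Q v -> span_set Q (fstar (f v)) ->
  ((`|v - fstar (f v)|)%:E <=
     (eps * M_Q Q ^+ 2)%:E * (C_Q Q * C_Q Q) * (`|v|)%:E)%E.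
Proof.
move=> [ip_lin ip_sym ip_norm] [ipk_lin ipk_sym _] Qub Qsym adj eps_gt0 JL v Sv Sfv.
set K := eps * M_Q Q ^+ 2; set z := v - fstar (f v).
have QM u : Q u -> `|u| <= M_Q Q.
  by move=> Qu; apply: sup_upper_bound; [split=> //; exists `|u|, u|exists u].
have K_ge0 : 0 <= K by rewrite mulr_ge0 ?sqr_ge0 ?ltW.
have D_atoms : forall u w, Q u -> Q w -> `|defect ip ipk f u w| <= K :=
  defect_atoms_bound ip_lin ip_sym ip_norm ipk_lin ipk_sym Qsym (ltW eps_gt0) QM JL.
clearbody K.
have Sz : span_set Q z := span_setB Sv Sfv.
(* |z|^2 = <v, z> - <f^* f v, z> = D v z *)
have z_sq : `|z| ^+ 2 = defect ip ipk f v z by rewrite -ip_norm /z bilinBl // adj.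
have key : `|z| ^+ 2 <= K * atomic_norm Q v * atomic_norm Q z.
  rewrite z_sq; apply: le_trans (ler_norm _) _.
  exact: (bilin_atomic_bound (defect_linear f ip_lin ipk_lin)
    (defect_sym f ip_sym ipk_sym) K_ge0 D_atoms Sv Sz).
have [->|z_neq0] := eqVneq z 0.
  by rewrite normr0 !mule_ge0 ?lee_fin ?C_Q_ge0.
have z_gt0 : 0 < `|z| by rewrite normr_gt0.
case HC : (C_Q Q) => [r| |]; last by have := C_Q_ge0 Q; rewrite HC.
- have r_ge0 : 0 <= r by rewrite -lee_fin -HC C_Q_ge0.
  have Av := atomic_norm_le_C_Q HC Sv; have Az := atomic_norm_le_C_Q HC Sz.
  have bound : `|z| ^+ 2 <= K * (r * `|v|) * (r * `|z|).
    apply: (le_trans key); apply: ler_pM; rewrite ?mulr_ge0 ?atomic_norm_ge0 //.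
    by rewrite ler_wpM2l.
  rewrite -!EFinM lee_fin -(ler_pM2r z_gt0) -expr2.
  have -> : K * (r * r) * `|v| * `|z| = K * (r * `|v|) * (r * `|z|) by ring.
  exact: bound.
- (* z <> 0 forces K > 0 and v <> 0, so the right-hand side is +oo *)
  have K_gt0 : 0 < K.
    rewrite lt_def K_ge0 andbT; apply: contraTneq key => ->.
    by rewrite !mul0r -ltNge exprn_gt0.
  have v_gt0 : 0 < `|v|.
    rewrite normr_gt0; apply: contra z_neq0 => /eqP v0.
    by rewrite -normr_eq0 -sqrf_eq0 z_sq v0 (bilin0l (defect_linear f ip_lin ipk_lin)).
  by rewrite mulyy gt0_muley ?lte_fin // gt0_mulye ?lte_fin // leey.
Qed.
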